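(* Let $G=(V,E)$ be a finite undirected graph with $V \subset \mathbb{N}$, and let $\mathbf{p}=(p_e)_{e\in E}$ be any collection of probabilities $p_e\in[0,1]$. Let $\vec G(\mathbf{p})$ be the random orientation of $G$ in which each edge $e=\{x,y\}\in E$ with $x<y$ is oriented from $x$ to $y$ with probability $p_e$ and from $y$ to $x$ otherwise, independently over edges, with probability measure $\mathbb{P}_{G,\mathbf{p}}$. For a set $A\subset V$ and a vertex $y$, write $A\rightarrow y$ for the event that for some $x\in A$ there is a directed path from $x$ to $y$ in $\vec G(\mathbf{p})$. Then for any nonempty set $S\subset V$ and any vertices $a,b\in V$, \[\mathbb{P}_{G,\mathbf{p}}(S\rightarrow a \cap S\rightarrow b) \ge \mathbb{P}_{G,\mathbf{p}}(S\rightarrow a)\, \mathbb{P}_{G,\mathbf{p}}(S\rightarrow b).\]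
   Context: A directed path from $x$ to $x$ is taken to exist trivially (the path of length zero), so $S\rightarrow y$ always holds when $y\in S$. *)

From mathcomp Require Import all_boot all_order all_algebra.
Set Implicit Arguments. Unset Strict Implicit. Unset Printing Implicit Defensive.
Import Order.TTheory GRing.Theory Num.Theory.
Local Open Scope ring_scope.

(* Vertices are natural numbers below some bound N, i.e. elements of 'I_N;
   the vertex set V is a subset of 'I_N (every finite V ⊂ ℕ arises this way).
   An undirected simple graph is given by its edge set E, each edge {x,y}
   with x < y being stored as the ordered pair (x, y).
   An orientation is a boolean function w on pairs: for e = (x,y) ∈ E,
   w e = true means e is oriented x -> y, false means y -> x.
   Values of w outside E are irrelevant; to get a genuine sample space we
   only sum over orientations with w e = false for e ∉ E. *)


Definition is_graph (N : nat) (V : {set 'I_N}) (E : {set 'I_N * 'I_N}) :=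
  forall e, e \in E -> [/\ (e.1 < e.2)%N, e.1 \in V & e.2 \in V].

Definition darc (N : nat) (E : {set 'I_N * 'I_N}) (w : {ffun 'I_N * 'I_N -> bool})
  : rel 'I_N :=
  fun u v => (((u, v) \in E) && w (u, v)) || (((v, u) \in E) && ~~ w (v, u)).

Definition reaches (N : nat) (E : {set 'I_N * 'I_N}) (w : {ffun 'I_N * 'I_N -> bool})
  (S : {set 'I_N}) (y : 'I_N) : bool :=
  [exists x in S, connect (darc E w) x y].

Definition orientation (N : nat) (E : {set 'I_N * 'I_N}) (w : {ffun 'I_N * 'I_N -> bool}) :=
  [forall e, (e \notin E) ==> ~~ w e].

Definition weight (R : realFieldType) (N : nat) (E : {set 'I_N * 'I_N})
  (p : 'I_N * 'I_N -> R) (w : {ffun 'I_N * 'I_N -> bool}) : R :=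
  \prod_(e in E) (if w e then p e else 1 - p e).

Definition Prob (R : realFieldType) (N : nat) (E : {set 'I_N * 'I_N})
  (p : 'I_N * 'I_N -> R) (A : pred {ffun 'I_N * 'I_N -> bool}) : R :=
  \sum_(w | orientation E w && A w) weight E p w.

(* Induction on the number of edges. If no edge can be oriented out of S, then
   S -> y simply means y \in S and both sides of the inequality coincide.
   Otherwise condition on the orientation of an edge e = {s, v} with s \in S and
   v \notin S. Oriented s -> v, the event S -> y becomes (S ∪ {v}) -> y in G - e;
   oriented v -> s, it becomes S -> y in G - e. Both conditional laws satisfy the
   inequality by induction, and since (S ∪ {v}) -> y contains S -> y, the conditional
   probabilities x1 >= x2 of S -> a and y1 >= y2 of S -> b are ordered alike, so
   (q x1 + (1 - q) x2) (q y1 + (1 - q) y2) <= q x1 y1 + (1 - q) x2 y2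
   closes the induction. *)

From mathcomp Require Import all_boot all_order all_algebra.
From mathcomp Require Import ring.
Import Order.TTheory GRing.Theory Num.Theory.
Local Open Scope ring_scope.
Set Implicit Arguments. Unset Strict Implicit. Unset Printing Implicit Defensive.

Lemma mixture_mulr_le (R : numDomainType) (q x1 x2 y1 y2 z1 z2 : R) :
  0 <= q <= 1 -> x1 * y1 <= z1 -> x2 * y2 <= z2 -> 0 <= (x1 - x2) * (y1 - y2) ->
  (q * x1 + (1 - q) * x2) * (q * y1 + (1 - q) * y2) <= q * z1 + (1 - q) * z2.
Proof.
case/andP=> q0 q1 le1 le2 le12; rewrite -subr_ge0.
have -> : q * z1 + (1 - q) * z2 - (q * x1 + (1 - q) * x2) * (q * y1 + (1 - q) * y2)
  = q * (z1 - x1 * y1) + (1 - q) * (z2 - x2 * y2) + q * (1 - q) * ((x1 - x2) * (y1 - y2)).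
  by ring.
have q'0 : 0 <= 1 - q by rewrite subr_ge0.
have d1 : 0 <= z1 - x1 * y1 by rewrite subr_ge0.
have d2 : 0 <= z2 - x2 * y2 by rewrite subr_ge0.
exact: addr_ge0 (addr_ge0 (mulr_ge0 q0 d1) (mulr_ge0 q'0 d2))
               (mulr_ge0 (mulr_ge0 q0 q'0) le12).
Qed.

Section Reachability.
Variable T : finType.
Implicit Types (r : rel T) (S U : {set T}) (y : T).

Definition reachable r S y := [exists x in S, connect r x y].

Definition forward_closed r U := forall u x, u \in U -> r u x -> x \in U.

Lemma reachable_closedP r S y :
  reflect (forall U, S \subset U -> forward_closed r U -> y \in U) (reachable r S y).
Proof.
apply: (iffP exists_inP) => [[x xS /connectP [q rq ->]] U SU rU | inU].
  elim: q x {xS}(subsetP SU x xS) rq => [|z q IHq] x //= xU /andP [rxz rq].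
  exact: IHq (rU _ _ xU rxz) rq.
suff: y \in [set z | reachable r S z] by rewrite inE => /exists_inP.
apply: inU => [|u x]; rewrite ?inE.
  by apply/subsetP => x xS; rewrite inE; apply/exists_inP; exists x.
case/exists_inP => z zS ru rux; apply/exists_inP; exists z => //.
exact: connect_trans ru (connect1 rux).
Qed.

Lemma eq_reachable r r' S S' y :
  (forall U, S \subset U /\ forward_closed r U <-> S' \subset U /\ forward_closed r' U) ->
  reachable r S y = reachable r' S' y.
Proof.
move=> eqU; apply/reachable_closedP/reachable_closedP => inU U SU rU;
  by apply: inU; apply eqU.
Qed.

Lemma eq_reachable_rel r r' S y : r =2 r' -> reachable r S y = reachable r' S y.
Proof. by move=> rr'; apply: eq_existsb => x; rewrite (eq_connect rr'). Qed.

Lemma reachable_subset r S S' y : S \subset S' -> reachable r S y -> reachable r S' y.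
Proof.
by move=> /subsetP SS' /exists_inP [x /SS' xS' rxy]; apply/exists_inP; exists x.
Qed.

Lemma reachable_closed r S y : forward_closed r S -> reachable r S y = (y \in S).
Proof.
move=> rS; apply/reachable_closedP/idP => [|yS U /subsetP SU _]; last exact: SU.
by apply; rewrite ?subxx.
Qed.

Definition add_arc r (a : T * T) : rel T := fun u x => r u x || ((u, x) == a).

Lemma forward_closed_add_arc r s v U :
  forward_closed (add_arc r (s, v)) U <-> forward_closed r U /\ (s \in U -> v \in U).
Proof.
split=> [rU | [rU sv] u x uU /orP [/(rU _ _ uU) //| /eqP [us ->]]].
  split=> [u x uU rux | sU]; first by apply: rU uU _; rewrite /add_arc rux.
  by apply: rU sU _; rewrite /add_arc eqxx orbT.
by apply: sv; rewrite -us.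
Qed.

Lemma reachable_add_arc_out r S s v y : s \in S ->
  reachable (add_arc r (s, v)) S y = reachable r (v |: S) y.
Proof.
move=> sS; apply: eq_reachable => U; rewrite forward_closed_add_arc subUset sub1set.
split=> [[SU [rU sv]] | [/andP [vU SU] rU]]; last by [].
by rewrite SU sv ?(subsetP SU).
Qed.

Lemma reachable_add_arc_in r S s v y : s \in S ->
  reachable (add_arc r (v, s)) S y = reachable r S y.
Proof.
move=> sS; apply: eq_reachable => U; rewrite forward_closed_add_arc.
split=> [[SU [rU _]] // | [SU rU]].
by split=> //; split=> // _; apply: (subsetP SU).
Qed.

End Reachability.

Section Orientations.
Variable N : nat.
Implicit Types (E : {set 'I_N * 'I_N}) (e : 'I_N * 'I_N) (w : {ffun 'I_N * 'I_N -> bool}).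
Implicit Types (S : {set 'I_N}) (y : 'I_N).

Definition reorient w e (b : bool) : {ffun 'I_N * 'I_N -> bool} :=
  [ffun x => if x == e then b else w x].

Definition arc e (b : bool) : 'I_N * 'I_N := if b then e else (e.2, e.1).

Lemma reachesE E w S y : reaches E w S y = reachable (darc E w) S y.
Proof. by []. Qed.

Lemma darc_reorient E w e b : e \in E ->
  darc E (reorient w e b) =2 add_arc (darc (E :\ e) w) (arc e b).
Proof.
move=> eE u x; rewrite /darc /add_arc /arc !in_setD1 !ffunE.
case: ((u, x) =P e) => [?|/eqP ux]; first subst e.
  rewrite eE /=; case: ((x, u) =P (u, x)) => [[? _]|/eqP xu].
    by subst x; case: b; rewrite /= ?eE ?eqxx ?orbT.
  have /negbTE ux : (u, x) != (x, u) by rewrite eq_sym.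
  by case: b; rewrite /= ?eqxx ?ux ?orbT ?orbF.
case: ((x, u) =P e) => [?|/eqP xu]; first subst e.
  by rewrite eE /=; case: b; rewrite /= ?(negbTE ux) ?eqxx ?orbF ?orbT.
have /negbTE xu' : (u, x) != (e.2, e.1).
  by apply: contraNneq xu => -[-> ->]; case: (e).
by case: b; rewrite /= ?(negbTE ux) ?xu' ?orbF.
Qed.

Lemma arc_negb e b : arc e (~~ b) = ((arc e b).2, (arc e b).1).
Proof. by case: b; case: e. Qed.

Lemma reaches_reorient_out E w e b S y : e \in E -> (arc e b).1 \in S ->
  reaches E (reorient w e b) S y = reaches (E :\ e) w ((arc e b).2 |: S) y.
Proof.
move=> eE sS; rewrite !reachesE (eq_reachable_rel _ _ (darc_reorient w b eE)).
by rewrite [arc e b]surjective_pairing reachable_add_arc_out.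
Qed.

Lemma reaches_reorient_in E w e b S y : e \in E -> (arc e b).2 \in S ->
  reaches E (reorient w e b) S y = reaches (E :\ e) w S y.
Proof.
move=> eE sS; rewrite !reachesE (eq_reachable_rel _ _ (darc_reorient w b eE)).
by rewrite [arc e b]surjective_pairing reachable_add_arc_in.
Qed.

Lemma reaches_no_exit E w S y :
  {in E, forall e o, (arc e o).1 \in S -> (arc e o).2 \in S} -> reaches E w S y = (y \in S).
Proof.
move=> noexit; rewrite reachesE reachable_closed // => u x uS.
by case/orP=> /andP [eE _]; [apply: (noexit _ eE true) | apply: (noexit _ eE false)].
Qed.

End Orientations.

Section Probability.
Variables (R : realFieldType) (N : nat) (p : 'I_N * 'I_N -> R).
Implicit Types (E : {set 'I_N * 'I_N}) (e : 'I_N * 'I_N) (w : {ffun 'I_N * 'I_N -> bool}).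
Implicit Types (A B : pred {ffun 'I_N * 'I_N -> bool}).

Definition edge_prob e (b : bool) : R := if b then p e else 1 - p e.

Lemma edge_probN e b : edge_prob e (~~ b) = 1 - edge_prob e b.
Proof. by case: b; rewrite /edge_prob /=; ring. Qed.

Lemma orientation_reorient E w e b : e \in E ->
  orientation E (reorient w e b) && ~~ w e = orientation (E :\ e) w.
Proof.
move=> eE; apply/andP/forall_inP => [[/forall_inP wE we] x | wE].
  rewrite in_setD1 negb_and negbK; case: eqP => [-> //| /eqP xe xE].
  by have := wE x xE; rewrite ffunE (negbTE xe).
split; last by apply: wE; rewrite in_setD1 eqxx.
apply/forall_inP => x xE; rewrite ffunE; case: eqP => [xe | _]; last first.
  by apply: wE; rewrite in_setD1 (negbTE xE) andbF.
by rewrite xe eE in xE.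
Qed.

Lemma reorient_reorient_eq w e b c : (reorient (reorient w e b) e c == w) = (w e == c).
Proof.
apply/eqP/eqP => [<- | wec]; first by rewrite !ffunE eqxx.
by apply/ffunP => x; rewrite !ffunE; case: eqP => [-> |].
Qed.

Lemma weight_reorient E w e b : e \in E ->
  weight E p (reorient w e b) = edge_prob e b * weight (E :\ e) p w.
Proof.
move=> eE; rewrite /weight (bigD1 e) //= ffunE eqxx; congr (_ * _).
apply: eq_big => [x | x /andP [_ xe]]; first by rewrite in_setD1 andbC.
by rewrite ffunE (negbTE xe).
Qed.

Lemma Prob_ext E A B : A =1 B -> Prob E p A = Prob E p B.
Proof. by move=> AB; apply: eq_bigl => w; rewrite AB. Qed.

Lemma sum_weight_edge_eq E A e b : e \in E ->
  \sum_(w | orientation E w && A w && (w e == b)) weight E p w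
    = edge_prob e b * Prob (E :\ e) p (fun w => A (reorient w e b)).
Proof.
move=> eE; rewrite /Prob big_distrr /=.
rewrite (reindex_onto (fun w => reorient w e b) (fun w => reorient w e false)) /=.
  apply: eq_big => [w | w _]; last exact: weight_reorient.
  rewrite reorient_reorient_eq ffunE eqxx -(orientation_reorient w b eE).
  have -> : (b == b) = true by exact: eqxx.
  by case: (w e); rewrite ?andbF ?andbT // andbAC.
move=> w /andP [_ /eqP wb]; apply/ffunP => x; rewrite !ffunE.
by case: eqP => [-> |].
Qed.

Lemma Prob_split E A e b : e \in E ->
  Prob E p A = edge_prob e b * Prob (E :\ e) p (fun w => A (reorient w e b))
             + edge_prob e (~~ b) * Prob (E :\ e) p (fun w => A (reorient w e (~~ b))).
Proof.
move=> eE; rewrite -!sum_weight_edge_eq // /Prob (bigID (fun w => w e == b)) /=.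
by congr (_ + _); apply: eq_bigl => w; case: (w e); case: b.
Qed.

Lemma Prob_const E (c : bool) : Prob E p (fun _ => c) = c%:R.
Proof.
have [n] := ubnP #|E|; elim: n E => // n IHn E ltEn.
have [-> | [e eE]] := set_0Vmem E.
  case: c IHn => _; last by rewrite /Prob big_pred0 // => w; rewrite andbF.
  rewrite /Prob (big_pred1 [ffun => false]) => [|w]; first by rewrite /weight big_set0.
  rewrite /= andbT; apply/forallP/eqP => [w0 | -> x]; last by rewrite ffunE implybT.
  by apply/ffunP => x; rewrite ffunE; apply/negbTE/(implyP (w0 x)); rewrite inE.
have ltE'n : (#|E :\ e| < n)%N by rewrite (cardsD1 e E) eE in ltEn.
by rewrite (Prob_split _ true eE) !IHn // -mulrDl edge_probN addrC subrK mul1r.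
Qed.

Lemma edge_prob_itv e b : 0 <= p e <= 1 -> 0 <= edge_prob e b <= 1.
Proof.
by case/andP=> pe0 pe1; case: b; rewrite /edge_prob ?subr_ge0 ?gerBl ?pe0 ?pe1.
Qed.

Lemma Prob_le E A B : {in E, forall e, 0 <= p e <= 1} ->
  (forall w, A w -> B w) -> Prob E p A <= Prob E p B.
Proof.
move=> p01 AB; rewrite /Prob !big_mkcondr /=; apply: ler_sum => w _.
have weight_ge0 : 0 <= weight E p w.
  by apply: prodr_ge0 => e /p01 /(edge_prob_itv (w e)) /andP [].
by case: (boolP (A w)) => [/AB -> // | _]; case: (B w).
Qed.

(* The three events of the theorem are [F (S -> a) (S -> b)] for
   [F := fun x _ => x], [fun _ y => y] and [andb]. *)
Section Reaches.
Variables (E : {set 'I_N * 'I_N}) (S : {set 'I_N}) (F : bool -> bool -> bool) (a b : 'I_N).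

Lemma Prob_reaches_no_exit :
  {in E, forall e o, (arc e o).1 \in S -> (arc e o).2 \in S} ->
  Prob E p (fun w => F (reaches E w S a) (reaches E w S b)) = (F (a \in S) (b \in S))%:R.
Proof.
by move=> noexit; rewrite -(Prob_const E); apply: Prob_ext => w; rewrite !reaches_no_exit.
Qed.

Lemma Prob_reaches_split e o : e \in E -> (arc e o).1 \in S ->
  Prob E p (fun w => F (reaches E w S a) (reaches E w S b))
    = edge_prob e o * Prob (E :\ e) p (fun w =>
        F (reaches (E :\ e) w ((arc e o).2 |: S) a) (reaches (E :\ e) w ((arc e o).2 |: S) b))
    + (1 - edge_prob e o) * Prob (E :\ e) p
        (fun w => F (reaches (E :\ e) w S a) (reaches (E :\ e) w S b)).
Proof.
move=> eE srcS; rewrite (Prob_split _ o eE) edge_probN.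
have tgtS : (arc e (~~ o)).2 \in S by rewrite arc_negb.
by congr (_ * _ + _ * _); apply: Prob_ext => w;
  rewrite ?(reaches_reorient_out _ _ eE srcS) ?(reaches_reorient_in _ _ eE tgtS).
Qed.

End Reaches.

Lemma reaches_correlation E S a b : {in E, forall e, 0 <= p e <= 1} ->
  Prob E p (fun w => reaches E w S a) * Prob E p (fun w => reaches E w S b)
    <= Prob E p (fun w => reaches E w S a && reaches E w S b).
Proof.
have [n] := ubnP #|E|; elim: n E S => // n IHn E S ltEn p01.
have [/exists_inP [e eE /existsP [o /andP [srcS _]]] | noexit] :=
  boolP [exists e in E, [exists o, ((arc e o).1 \in S) && ((arc e o).2 \notin S)]].
  have ltE'n : (#|E :\ e| < n)%N by rewrite (cardsD1 e E) eE in ltEn.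
  have p01' : {in E :\ e, forall e, 0 <= p e <= 1} by move=> e' /setD1P [_ /p01].
  rewrite (Prob_reaches_split (fun x _ => x) a b eE srcS).
  rewrite (Prob_reaches_split (fun _ y => y) a b eE srcS).
  rewrite (Prob_reaches_split andb a b eE srcS) /=.
  apply: mixture_mulr_le; rewrite ?IHn ?edge_prob_itv ?p01 //.
  have le_S_vS y : Prob (E :\ e) p (fun w => reaches (E :\ e) w S y)
      <= Prob (E :\ e) p (fun w => reaches (E :\ e) w ((arc e o).2 |: S) y).
    by apply: Prob_le => // w; apply: reachable_subset; rewrite subsetUr.
  by rewrite mulr_ge0 // subr_ge0.
have {}noexit : {in E, forall e o, (arc e o).1 \in S -> (arc e o).2 \in S}.
  move=> e eE o srcS; apply: contraNT noexit => tgtS.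
  by apply/exists_inP; exists e => //; apply/existsP; exists o; rewrite srcS.
rewrite (Prob_reaches_no_exit (fun x _ => x) a b noexit).
rewrite (Prob_reaches_no_exit (fun _ y => y) a b noexit).
by rewrite (Prob_reaches_no_exit andb a b noexit) -natrM mulnb.
Qed.

End Probability.

Theorem theorem3 (R : realFieldType) (N : nat) (V : {set 'I_N})
  (E : {set 'I_N * 'I_N}) (p : 'I_N * 'I_N -> R)
  (S : {set 'I_N}) (a b : 'I_N) :
  is_graph V E ->
  (forall e, e \in E -> 0 <= p e <= 1) ->
  S \subset V -> S != set0 -> a \in V -> b \in V ->
  Prob E p (fun w => reaches E w S a && reaches E w S b)
    >= Prob E p (fun w => reaches E w S a) * Prob E p (fun w => reaches E w S b).
Proof.
(* Neither the vertex set nor S != set0 plays a role: the inequality holds for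
   any edge set, source set and targets. *)
by move=> _ p01 _ _ _ _; apply: reaches_correlation.
Qed.
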